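(* Let $D,\ell\in\mathbb{N}$ and $m=\ell D$. Suppose $H,A\subset[0,1)$ are $2^{-m}$-sets such that $H$ is $(D,\ell,R)$-uniform and $A$ is $(D,\ell,R')$-uniform. Then \[ |A+H|\ge2^{-m/D}|H|\prod_{s\in[\ell]:\,R_s=1}R'_s. \]
   Context: A $2^{-m}$-set is a set all of whose elements are integer multiples of $2^{-m}$. $[\ell]=\{0,\dots,\ell-1\}$. $\mathcal{D}_s$ is the family of dyadic intervals $[j2^{-s},(j+1)2^{-s})$, $\mathcal{D}_s(E)$ those meeting $E$, and $\mathcal{N}(E,s)=|\mathcal{D}_s(E)|$. Given a sequence $(R_s)_{s\in[\ell]}$ with values in $[1,2^D]$, a $2^{-m}$-set $A$ is $(D,\ell,R)$-uniform if $\mathcal{N}(A\cap I,(s+1)D)=R_s$ for every $s\in[\ell]$ and every $I\in\mathcal{D}_{sD}(A)$. $A+H=\{a+h:a\in A,h\in H\}$. *)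

From HB Require Import structures.
From mathcomp Require Import all_boot all_order all_algebra.
Set Implicit Arguments. Unset Strict Implicit. Unset Printing Implicit Defensive.
Import Order.TTheory GRing.Theory Num.Theory.

(* Encoding: a 2^{-m}-subset of [0,1) is a subset of {k 2^{-m} : 0 <= k < 2^m};
   we represent it by the set of numerators k, i.e. an element of {set 'I_(2^m)}.
   The point k : 'I_(2^m) stands for the real number k / 2^m. *)

(* Index j of the dyadic interval [j 2^{-s}, (j+1) 2^{-s}) of D_s containing
   the point k / 2^m (valid for s <= m):  j = floor(k 2^s / 2^m). *)
Definition dyad (m : nat) (s : nat) (k : 'I_(2 ^ m)) : nat := (val k %/ 2 ^ (m - s))%N.
Arguments dyad : clear implicits.

Definition Ncov (m : nat) (E : {set 'I_(2 ^ m)}) (s : nat) : nat :=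
  size (undup [seq dyad m s k | k <- enum E]).
Arguments Ncov : clear implicits.

Definition uniform (F : numDomainType) (D l : nat) (R : nat -> F)
    (A : {set 'I_(2 ^ (l * D))}) : Prop :=
  forall s : nat, (s < l)%N ->
  forall j : nat, j \in [seq dyad (l * D) (s * D) k | k <- enum A] ->
    ((Ncov (l * D) [set k in A | dyad (l * D) (s * D) k == j] (s.+1 * D))%:R = R s)%R.

(* |A + H| : the sums a + h are multiples of 2^{-m} lying in [0, 2);
   their numerators lie in [0, 2^(m+1)). *)
Arguments uniform {F} D l R A.

Definition sumset (m : nat) (A H : {set 'I_(2 ^ m)}) : {set 'I_(2 ^ m.+1)} :=
  [set x : 'I_(2 ^ m.+1) | [exists a in A, exists h in H, val x == (val a + val h)%N]].

From HB Require Import structures.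
From mathcomp Require Import all_boot all_order all_algebra zify.
Import Order.TTheory GRing.Theory Num.Theory.

(* Induction down the dyadic scales.  For blocks A_I, H_J of A and H cut out by one
   interval of D_{tD} each, with A_I nonempty, we show
     |H_J| * prod_{t <= s < l, R_s = 1} R'_s <= 2^(l-t) |A_I + H_J|.
   At t = l this is |H_J| <= |a + H_J|.  To pass from t+1 to t: if R_t = 1 then H_J
   is a single subblock H', and we sum the bound over the R'_t subblocks A' of A_I
   paired with H'; otherwise we pair the subblock A' containing a with every
   subblock of H_J.  A point x of A_I + H_J lies in at most two of the sumsets
   A' + H' involved, because if A', H' sit in the i-th and j-th intervals of
   D_{(t+1)D}, then x lies in the (i+j)-th or the (i+j+1)-th one; this costs the
   factor 2 per scale. *)

Set Implicit Arguments.
Unset Strict Implicit.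
Unset Printing Implicit Defensive.

Lemma sum_nat_of_bool_count (I : Type) (cs : seq I) (P : pred I) :
  \sum_(c <- cs) (P c : nat) = count P cs.
Proof. by rewrite -sumn_count sumnE big_map. Qed.

Lemma card_sum_mem (T : finType) (U Y : {set T}) :
  Y \subset U -> #|Y| = \sum_(x in U) (x \in Y : nat).
Proof.
move=> sYU; rewrite (bigID (mem Y)) /=.
rewrite [X in _ + X]big1; last by move=> x /andP[_ /negbTE ->].
rewrite addn0 -sum1_card; apply: eq_big => [x|x ->] //.
by apply/idP/andP => [xY|[]//]; rewrite (subsetP sYU).
Qed.

Lemma sum_card_count (I : eqType) (T : finType) (cs : seq I) (f : I -> {set T})
    (U : {set T}) :
  (forall c, c \in cs -> f c \subset U) ->
  \sum_(c <- cs) #|f c| = \sum_(x in U) count (fun c => x \in f c) cs.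
Proof.
move=> sfU; rewrite (eq_big_seq _ (fun c cs_c => card_sum_mem (sfU c cs_c))).
by rewrite exchange_big; apply: eq_bigr => x _; rewrite sum_nat_of_bool_count.
Qed.

Lemma card_partition_seq (T : finType) (Y : {set T}) (g : T -> nat) (cs : seq nat) :
  uniq cs -> (forall x, x \in Y -> g x \in cs) ->
  #|Y| = \sum_(c <- cs) #|[set x in Y | g x == c]|.
Proof.
move=> uniq_cs gY; rewrite (sum_card_count (U := Y)); last first.
  by move=> c _; apply/subsetP => x; rewrite inE => /andP[].
rewrite -sum1_card; apply: eq_bigr => x xY.
rewrite (eq_count (a2 := pred1 (g x))) ?count_uniq_mem ?gY // => c.
by rewrite inE xY eq_sym.
Qed.

Lemma sum_card_le_twice (T : finType) (cs : seq nat) (f : nat -> {set T})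
    (U : {set T}) (g : T -> nat) (e : nat) :
  uniq cs -> (forall c, c \in cs -> f c \subset U) ->
  (forall c x, c \in cs -> x \in f c -> g x = c + e \/ g x = (c + e).+1) ->
  \sum_(c <- cs) #|f c| <= 2 * #|U|.
Proof.
move=> uniq_cs sfU gf; rewrite (sum_card_count sfU) -sum1_card big_distrr /=.
apply: leq_sum => x _; rewrite muln1 -size_filter.
apply: (@uniq_leq_size _ _ [:: g x - e; (g x - e).-1]); first exact: filter_uniq.
move=> c; rewrite mem_filter !inE => /andP[xfc cs_c].
by case: (gf c x cs_c xfc) => ->; apply/orP; [left | right]; apply/eqP; lia.
Qed.

Lemma divnD_cases (d a b : nat) : 0 < d ->
  (a + b) %/ d = a %/ d + b %/ d \/ (a + b) %/ d = (a %/ d + b %/ d).+1.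
Proof.
move=> d_gt0; rewrite divnD //.
by case: leqP => _; [right; exact: addn1 | left; exact: addn0].
Qed.

Lemma dyad0 (m : nat) (k : 'I_(2 ^ m)) : dyad m 0 k = 0.
Proof. by rewrite /dyad subn0 (divn_small (ltn_ord k)). Qed.

Lemma dyad_coarsen (m s s' : nat) (k : 'I_(2 ^ m)) : s <= s' <= m ->
  dyad m s k = dyad m s' k %/ 2 ^ (s' - s).
Proof.
by move=> le_s; rewrite /dyad -divnMA -expnD; congr (_ %/ 2 ^ _); lia.
Qed.

Lemma leq_card_sumset (m : nat) (X Y : {set 'I_(2 ^ m)}) (a : 'I_(2 ^ m)) :
  a \in X -> #|Y| <= #|sumset X Y|.
Proof.
move=> aX; have a_add_lt (h : 'I_(2 ^ m)) : a + h < 2 ^ m.+1.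
  by rewrite expnS; have := ltn_ord a; have := ltn_ord h; lia.
rewrite -(card_imset _ (f := fun h => Ordinal (a_add_lt h))); last first.
  by move=> h1 h2 /(congr1 val) /= /addnI /val_inj.
apply/subset_leq_card/subsetP => _ /imsetP[h hY ->]; rewrite inE.
by apply/existsP; exists a; rewrite aX; apply/existsP; exists h; rewrite hY /=.
Qed.

Lemma sumsetS (m : nat) (X X' Y Y' : {set 'I_(2 ^ m)}) :
  X \subset X' -> Y \subset Y' -> sumset X Y \subset sumset X' Y'.
Proof.
move=> sXX' sYY'; apply/subsetP => x; rewrite !inE.
case/existsP=> a /andP[aX /existsP[h /andP[hY xah]]].
apply/existsP; exists a; rewrite (subsetP sXX') //.
by apply/existsP; exists h; rewrite (subsetP sYY').
Qed.

Definition dblock (m : nat) (X : {set 'I_(2 ^ m)}) (s j : nat) : {set 'I_(2 ^ m)} :=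
  [set k in X | dyad m s k == j].

Definition subblocks (m : nat) (X : {set 'I_(2 ^ m)}) (s j s' : nat) : seq nat :=
  undup [seq dyad m s' k | k <- enum (dblock X s j)].

Lemma dblock0 (m : nat) (X : {set 'I_(2 ^ m)}) : dblock X 0 0 = X.
Proof. by apply/setP => k; rewrite inE dyad0 andbT. Qed.

Section Subblocks.

Variables (m s s' j : nat) (X : {set 'I_(2 ^ m)}).

Lemma mem_subblocks (k : 'I_(2 ^ m)) :
  k \in dblock X s j -> dyad m s' k \in subblocks X s j s'.
Proof. by move=> kXj; rewrite mem_undup map_f ?mem_enum. Qed.

Lemma subblock_nonempty (c : nat) :
  c \in subblocks X s j s' -> exists k, k \in dblock X s' c.
Proof.
rewrite mem_undup => /mapP[k]; rewrite mem_enum !inE => /andP[kX _] ->.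
by exists k; rewrite inE kX eqxx.
Qed.

Hypothesis le_s : s <= s' <= m.

Lemma dblock_subblock (c : nat) : c \in subblocks X s j s' ->
  dblock X s' c = [set k in dblock X s j | dyad m s' k == c].
Proof.
rewrite mem_undup => /mapP[k0]; rewrite mem_enum inE => /andP[_ /eqP <-] ->.
apply/setP => k; rewrite !inE; case: (k \in X) => //=.
by case: eqP => [k_k0|]; rewrite ?andbF // !(dyad_coarsen _ le_s) k_k0 eqxx.
Qed.

Lemma dblock_subblock_sub (c : nat) :
  c \in subblocks X s j s' -> dblock X s' c \subset dblock X s j.
Proof.
by move/dblock_subblock->; apply/subsetP => k; rewrite inE => /andP[].
Qed.

Lemma card_dblock_subblocks :
  #|dblock X s j| = \sum_(c <- subblocks X s j s') #|dblock X s' c|.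
Proof.
rewrite (card_partition_seq (g := dyad m s') (cs := subblocks X s j s') (undup_uniq _));
  last first.
  exact: mem_subblocks.
by apply: eq_big_seq => c /dblock_subblock->.
Qed.

Lemma dblock_single_subblock (c : nat) :
  subblocks X s j s' = [:: c] -> dblock X s' c = dblock X s j.
Proof.
move=> Xc; rewrite dblock_subblock ?Xc ?mem_head //.
apply/setP => k; rewrite inE; case kXj: (k \in dblock X s j) => //=.
by have := mem_subblocks kXj; rewrite Xc inE.
Qed.

End Subblocks.

Lemma sumset_dblock_index (m s i j : nat) (X Y : {set 'I_(2 ^ m)})
    (x : 'I_(2 ^ m.+1)) :
  x \in sumset (dblock X s i) (dblock Y s j) ->
  x %/ 2 ^ (m - s) = i + j \/ x %/ 2 ^ (m - s) = (i + j).+1.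
Proof.
rewrite inE => /existsP[a /andP[/setIdP[_ /eqP <-] /existsP[h]]].
by case/andP=> /setIdP[_ /eqP <-] /eqP->; apply: divnD_cases; rewrite expn_gt0.
Qed.

Lemma sum_card_sumset_dblock (m s e : nat) (X Y X' Y' : {set 'I_(2 ^ m)})
    (cs : seq nat) (p q : nat -> nat) :
  uniq cs ->
  (forall c, c \in cs -> dblock X s (p c) \subset X' /\ dblock Y s (q c) \subset Y') ->
  (forall c, p c + q c = c + e) ->
  \sum_(c <- cs) #|sumset (dblock X s (p c)) (dblock Y s (q c))|
    <= 2 * #|sumset X' Y'|.
Proof.
move=> uniq_cs sub_pq pq_e.
apply: (sum_card_le_twice (f := fun c => sumset (dblock X s (p c)) (dblock Y s (q c)))
    (g := fun x => x %/ 2 ^ (m - s)) (e := e)) => //.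
  by move=> c /sub_pq[sX sY]; apply: sumsetS.
by move=> c x _ /sumset_dblock_index; rewrite pq_e.
Qed.

Local Open Scope ring_scope.

Lemma ler_sum_pow2 (F : realFieldType) (n M : nat) (cs : seq nat) (N : nat -> nat) :
  (\sum_(c <- cs) N c <= 2 * M)%N ->
  \sum_(c <- cs) 2 ^+ n * (N c)%:R <= 2 ^+ n.+1 * M%:R :> F.
Proof.
move=> le_NM; rewrite -mulr_sumr -natr_sum exprSr -mulrA ler_wpM2l ?exprn_ge0 //.
by rewrite -natrM ler_nat.
Qed.

Lemma uniform_size_subblocks (F : numDomainType) (D l s j : nat) (R : nat -> F)
    (X : {set 'I_(2 ^ (l * D))}) (k : 'I_(2 ^ (l * D))) :
  uniform D l R X -> (s < l)%N -> k \in dblock X (s * D) j ->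
  (size (subblocks X (s * D) j (s.+1 * D)))%:R = R s.
Proof.
by move=> unifX lt_sl /setIdP[kX /eqP <-]; apply: unifX; rewrite // map_f ?mem_enum.
Qed.

Section SumsetBlockBound.

Variables (F : realFieldType) (D l : nat) (R R' : nat -> F).
Variables (H A : {set 'I_(2 ^ (l * D))}).
Hypotheses (unifH : uniform D l R H) (unifA : uniform D l R' A).

Definition sumset_block_bound (t : nat) : Prop :=
  forall (jA jH : nat) (a : 'I_(2 ^ (l * D))), a \in dblock A (t * D) jA ->
  #|dblock H (t * D) jH|%:R * \prod_(t <= s < l | R s == 1) R' s
    <= 2 ^+ (l - t) * #|sumset (dblock A (t * D) jA) (dblock H (t * D) jH)|%:R.

Lemma sumset_block_bound_top : sumset_block_bound l.
Proof.
move=> jA jH a aAj; rewrite subnn expr0 mul1r big_geq // mulr1 ler_nat.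
exact: leq_card_sumset aAj.
Qed.

Section Step.

Variable t : nat.
Hypotheses (lt_tl : (t < l)%N) (IH : sumset_block_bound t.+1).

Let le_t : (t * D <= t.+1 * D <= l * D)%N.
Proof. by rewrite !leq_mul. Qed.

Let pow2_step : 2 ^+ (l - t) = 2 ^+ (l - t.+1).+1 :> F.
Proof. by rewrite subnSK. Qed.

Lemma sumset_block_bound_single : R t = 1 -> sumset_block_bound t.
Proof.
move=> Rt1 jA jH a aAj.
have [->|[h hHj]] := set_0Vmem (dblock H (t * D) jH).
  by rewrite cards0 mul0r mulr_ge0 ?exprn_ge0 ?ler0n.
have [c0 Hc0] : exists c0, subblocks H (t * D) jH (t.+1 * D) = [:: c0].
  have /eqP := uniform_size_subblocks unifH lt_tl hHj.
  by rewrite Rt1 pnatr_eq1; case: subblocks => [|c0 []] //; exists c0.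
rewrite big_ltn_cond // Rt1 eqxx -{1}(dblock_single_subblock le_t Hc0).
rewrite -(uniform_size_subblocks unifA lt_tl aAj) mulrCA mulr_natl.
rewrite -iter_addr_0 -count_predT -big_const_seq /= pow2_step.
set CA := subblocks A (t * D) jA (t.+1 * D).
apply: (@le_trans _ _ (\sum_(c <- CA) 2 ^+ (l - t.+1) *
    #|sumset (dblock A (t.+1 * D) c) (dblock H (t.+1 * D) c0)|%:R)).
  by rewrite !big_seq; apply: ler_sum => c /subblock_nonempty[k kAc]; exact: IH kAc.
apply/ler_sum_pow2/(sum_card_sumset_dblock (p := id) (q := fun=> c0)) => //.
  exact: undup_uniq.
move=> c Ac; split; first exact: (dblock_subblock_sub le_t Ac).
by apply: (dblock_subblock_sub le_t); rewrite Hc0 mem_head.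
Qed.

Lemma sumset_block_bound_branching : R t != 1 -> sumset_block_bound t.
Proof.
move=> Rt_neq1 jA jH a aAj.
rewrite big_ltn_cond // (negbTE Rt_neq1) (card_dblock_subblocks _ _ le_t).
rewrite natr_sum mulr_suml pow2_step.
set ga := dyad (l * D) (t.+1 * D) a.
have aAc : a \in dblock A (t.+1 * D) ga by rewrite inE eqxx andbT; case/setIdP: aAj.
apply: (@le_trans _ _ (\sum_(c <- subblocks H (t * D) jH (t.+1 * D)) 2 ^+ (l - t.+1) *
    #|sumset (dblock A (t.+1 * D) ga) (dblock H (t.+1 * D) c)|%:R)).
  by apply: ler_sum => c _; exact: IH aAc.
apply/ler_sum_pow2/(sum_card_sumset_dblock (p := fun=> ga) (q := id) (e := ga)).
- exact: undup_uniq.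
- move=> c Hc; split; last exact: (dblock_subblock_sub le_t Hc).
  by apply: (dblock_subblock_sub le_t); exact: mem_subblocks.
- by move=> c; rewrite addnC.
Qed.

Lemma sumset_block_bound_step : sumset_block_bound t.
Proof.
by case: (eqVneq (R t) 1) => [/sumset_block_bound_single | /sumset_block_bound_branching].
Qed.

End Step.

Lemma sumset_block_bound_le (t : nat) : (t <= l)%N -> sumset_block_bound t.
Proof.
move=> le_tl; rewrite -(subKn le_tl).
elim: (l - t)%N (leq_subr t l) => [|n IHn] le_nl.
  by rewrite subn0; exact: sumset_block_bound_top.
apply: sumset_block_bound_step; first lia.
by rewrite subnSK //; apply: IHn; exact: ltnW.
Qed.

End SumsetBlockBound.

Theorem mainTheorem11 (F : realFieldType) (D l : nat) (R R' : nat -> F)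
    (H A : {set 'I_(2 ^ (l * D))}) :
  (0 < D)%N ->
  (forall s : nat, (s < l)%N -> 1 <= R s <= 2 ^+ D) ->
  (forall s : nat, (s < l)%N -> 1 <= R' s <= 2 ^+ D) ->
  uniform D l R H ->
  uniform D l R' A ->
  A != set0 ->
  (2 ^- l) * (#|H|%:R) * (\prod_(s < l | R s == 1) R' s)
    <= (#|sumset A H|%:R : F).
Proof.
move=> _ _ _ unifH unifA /set0Pn[a aA].
have aA0 : a \in dblock A (0 * D) 0 by rewrite mul0n dblock0.
have := sumset_block_bound_le unifH unifA (leq0n l) 0 aA0.
rewrite mul0n !dblock0 subn0 big_mkord => bound.
by rewrite -mulrA ler_pdivrMl ?exprn_gt0.
Qed.
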